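(* Let $\mathsf V$ be a pseudovariety of semigroupoids. The following are equivalent: (1) $\mathsf V$ is concatenation-closed; (2) for every finite-vertex graph $A$, the set of $\mathsf V$-recognizable languages over $A$ is closed under concatenation; (3) $\mathsf V\supseteq\mathsf N$ and the multiplication in $\overline{\Omega}_A\mathsf V$ is open for every finite-vertex graph $A$; (4) $\mathsf V\supseteq\mathsf N$ and the multiplication in $\overline{\Omega}_A\mathsf V$ is open for every finite graph $A$.
   Context: A graph $G$ is a set partitioned into vertices $V(G)$ and edges $E(G)$, with source and range maps $\alpha,\omega\colon E(G)\to V(G)$; it is finite-vertex if $V(G)$ is finite. A semigroupoid is a graph $S$ with a partial associative multiplication defined exactly on $D(S)=\{(s,t)\in E(S)^2:\alpha(s)=\omega(t)\}$, with $\alpha(st)=\alpha(t)$, $\omega(st)=\omega(s)$. A pseudovariety of semigroupoids is a class of finite semigroupoids closed under divisors, finite direct products and finite coproducts; $\mathsf N$ is the pseudovariety of finite nilpotent semigroups. $\overline{\Omega}_A\mathsf V$ is the free pro-$\mathsf V$ semigroupoid over the finite-vertex graph $A$. $A^+$ is the free semigroupoid of nonempty paths over $A$. A language $L\subseteq E(A^+)$ is $\mathsf V$-recognizable if $L=\varphi^{-1}(\varphi(L))$ for some homomorphism $\varphi\colon A^+\to F$, $F\in\mathsf V$; concatenation $LK=\{uv: u\in L, v\in K, (u,v)\in D(A^+)\}$. $\mathsf V$ is concatenation-closed if for every finite graph $A$ the $\mathsf V$-recognizable languages over $A$ are closed under concatenation. Multiplication is open if the map $D(S)\to E(S)$ maps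 open sets to open sets. *)

From Stdlib Require Import List.
Import ListNotations.

Record graph := Graph {
  gV : Type; gE : Type;
  gsrc : gE -> gV;
  gtgt : gE -> gV
}.

Definition finite_vertex_graph (A : graph) : Prop :=
  exists l : list (gV A), forall x, In x l.

Definition finite_graph (A : graph) : Prop :=
  finite_vertex_graph A /\ exists l : list (gE A), forall e, In e l.

(* Raw semigroupoid data: the product [smul s t h] is defined exactly on
   D(S) = {(s,t) | alpha s = omega t}, witnessed by h. *)
Record sgd := Sgd {
  sV : Type; sE : Type;
  ssrc : sE -> sV;
  stgt : sE -> sV;
  smul : forall s t : sE, ssrc s = stgt t -> sE
}.

Definition is_sgd (S : sgd) : Prop :=
  (forall s t h, ssrc S (smul S s t h) = ssrc S t) /\
  (forall s t h, stgt S (smul S s t h) = stgt S s) /\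
  (forall s t h h', smul S s t h = smul S s t h') /\
  (forall s t r h1 h2 h3 h4,
      smul S (smul S s t h1) r h3 = smul S s (smul S t r h2) h4).

Definition finite_sgd (S : sgd) : Prop :=
  (exists l : list (sV S), forall x, In x l) /\
  (exists l : list (sE S), forall e, In e l).

Record hom (S T : sgd) := Hom { hv : sV S -> sV T; he : sE S -> sE T }.
Arguments hv {S T}. Arguments he {S T}.

Definition is_hom {S T : sgd} (f : hom S T) : Prop :=
  (forall e, ssrc T (he f e) = hv f (ssrc S e)) /\
  (forall e, stgt T (he f e) = hv f (stgt S e)) /\
  (forall s t h h', he f (smul S s t h) = smul T (he f s) (he f t) h').

Definition faithful {S T : sgd} (f : hom S T) : Prop :=
  forall e e', ssrc S e = ssrc S e' -> stgt S e = stgt S e' ->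
    he f e = he f e' -> e = e'.

Definition quotient_hom {S T : sgd} (g : hom S T) : Prop :=
  (forall x y, hv g x = hv g y -> x = y) /\
  (forall y, exists x, hv g x = y) /\
  (forall e, exists d, he g d = e).

Definition onto {S T : sgd} (f : hom S T) : Prop :=
  (forall y, exists x, hv f x = y) /\ (forall e, exists d, he f d = e).

Definition divides (S T : sgd) : Prop :=
  exists (U : sgd) (f : hom U T) (g : hom U S),
    is_sgd U /\ is_hom f /\ is_hom g /\ faithful f /\ quotient_hom g.

Definition prod_sgd (S T : sgd) : sgd :=
  Sgd (sV S * sV T) (sE S * sE T)
    (fun p => (ssrc S (fst p), ssrc T (snd p)))
    (fun p => (stgt S (fst p), stgt T (snd p)))
    (fun p q h => (smul S (fst p) (fst q) (f_equal fst h),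
                   smul T (snd p) (snd q) (f_equal snd h))).

Definition csrc (S T : sgd) (x : sE S + sE T) : sV S + sV T :=
  match x with inl s => inl (ssrc S s) | inr t => inr (ssrc T t) end.
Definition ctgt (S T : sgd) (x : sE S + sE T) : sV S + sV T :=
  match x with inl s => inl (stgt S s) | inr t => inr (stgt T t) end.

Lemma inl_inj' {X Y : Type} (a a' : X) : @inl X Y a = inl a' -> a = a'.
Proof. intro h; injection h; auto. Qed.
Lemma inr_inj' {X Y : Type} (a a' : Y) : @inr X Y a = inr a' -> a = a'.
Proof. intro h; injection h; auto. Qed.

Definition cmul (S T : sgd) (x y : sE S + sE T) :
  csrc S T x = ctgt S T y -> sE S + sE T :=
  match x as x0, y as y0 return csrc S T x0 = ctgt S T y0 -> sE S + sE T with
  | inl s, inl t => fun h => inl (smul S s t (inl_inj' _ _ h))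
  | inr s, inr t => fun h => inr (smul T s t (inr_inj' _ _ h))
  | inl s, inr _ => fun _ => inl s
  | inr s, inl _ => fun _ => inr s
  end.

Definition coprod_sgd (S T : sgd) : sgd :=
  Sgd (sV S + sV T) (sE S + sE T) (csrc S T) (ctgt S T) (cmul S T).

(* Empty product: the trivial semigroupoid; empty coproduct: the empty one. *)
Definition trivial_sgd : sgd :=
  Sgd unit unit (fun _ => tt) (fun _ => tt) (fun _ _ _ => tt).
Definition empty_sgd : sgd :=
  Sgd Empty_set Empty_set (fun x => x) (fun x => x) (fun s _ _ => s).

Definition pseudovariety (V : sgd -> Prop) : Prop :=
  (forall S, V S -> is_sgd S /\ finite_sgd S) /\
  (forall S T, V T -> is_sgd S -> finite_sgd S -> divides S T -> V S) /\
  V trivial_sgd /\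
  (forall S T, V S -> V T -> V (prod_sgd S T)) /\
  V empty_sgd /\
  (forall S T, V S -> V T -> V (coprod_sgd S T)).

Inductive is_prod (X : sgd) (f : nat -> sE X) : nat -> sE X -> Prop :=
| is_prod0 : is_prod X f 0 (f 0)
| is_prodS n w (h : ssrc X w = stgt X (f (S n))) :
    is_prod X f n w -> is_prod X f (S n) (smul X w (f (S n)) h).

Definition one_vertex (S : sgd) : Prop := exists x : sV S, forall y, y = x.

(* S^(n+1) = {z}: every product of n+1 elements equals the zero z *)
Definition nilpotent (S : sgd) : Prop :=
  exists (z : sE S) (n : nat), forall f w, is_prod S f n w -> w = z.

Definition containsN (V : sgd -> Prop) : Prop :=
  forall S, is_sgd S -> finite_sgd S -> one_vertex S -> nilpotent S -> V S.

(* (e, [f1; ...; fk]) represents the path e f1 ... fk (alpha e = omega f1, ...) *)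
Fixpoint is_path (A : graph) (e : gE A) (p : list (gE A)) : Prop :=
  match p with
  | [] => True
  | f :: q => gsrc A e = gtgt A f /\ is_path A f q
  end.

Fixpoint plast (A : graph) (e : gE A) (p : list (gE A)) : gE A :=
  match p with [] => e | f :: q => plast A f q end.

Lemma is_path_app (A : graph) (e : gE A) p f q :
  is_path A e p -> gsrc A (plast A e p) = gtgt A f -> is_path A f q ->
  is_path A e (p ++ f :: q).
Proof.
  revert e; induction p as [|g p IH]; simpl; intros e H1 H2 H3.
  - split; assumption.
  - destruct H1 as [H1 H1']. split; [assumption|]. apply IH; assumption.
Qed.

Definition pathE (A : graph) : Type :=
  { ep : gE A * list (gE A) | is_path A (fst ep) (snd ep) }.

Definition psrc (A : graph) (x : pathE A) : gV A :=
  gsrc A (plast A (fst (proj1_sig x)) (snd (proj1_sig x))).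
Definition ptgt (A : graph) (x : pathE A) : gV A :=
  gtgt A (fst (proj1_sig x)).

Definition pmul (A : graph) (x y : pathE A) (h : psrc A x = ptgt A y) : pathE A :=
  exist _ (fst (proj1_sig x), snd (proj1_sig x) ++ fst (proj1_sig y) :: snd (proj1_sig y))
    (is_path_app A _ _ _ _ (proj2_sig x) h (proj2_sig y)).

Definition Aplus (A : graph) : sgd := Sgd (gV A) (pathE A) (psrc A) (ptgt A) (pmul A).

Definition lang (A : graph) := sE (Aplus A) -> Prop.

Definition recognizable (V : sgd -> Prop) (A : graph) (L : lang A) : Prop :=
  exists (F : sgd) (phi : hom (Aplus A) F), V F /\ is_hom phi /\
    forall u, L u <-> exists v, L v /\ he phi v = he phi u.

Definition concat (A : graph) (L K : lang A) : lang A :=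
  fun w => exists u v (h : ssrc (Aplus A) u = stgt (Aplus A) v),
    L u /\ K v /\ w = smul (Aplus A) u v h.

Definition recog_concat_closed (V : sgd -> Prop) (A : graph) : Prop :=
  forall L K, recognizable V A L -> recognizable V A K ->
    recognizable V A (concat A L K).

Definition concatenation_closed (V : sgd -> Prop) : Prop :=
  forall A, finite_graph A -> recog_concat_closed V A.

(** * The free pro-V semigroupoid over A, as the inverse limit of the
    A-generated members of V (onto morphisms A^+ -> F, F in V). *)

Definition fidx (V : sgd -> Prop) (A : graph) : Type :=
  { F : sgd & { phi : hom (Aplus A) F | V F /\ is_hom phi /\ onto phi } }.

Definition fmap {V A} (i : fidx V A) : hom (Aplus A) (projT1 i) :=
  proj1_sig (projT2 i).

(* Candidate edges: families indexed by the inverse system. *)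
Definition family (V : sgd -> Prop) (A : graph) : Type :=
  forall i : fidx V A, sE (projT1 i).

(* Edges of the inverse limit: compatible families. *)
Definition compat {V A} (u : family V A) : Prop :=
  forall (i j : fidx V A) (th : hom (projT1 i) (projT1 j)), is_hom th ->
    (forall x, hv th (hv (fmap i) x) = hv (fmap j) x) ->
    (forall p, he th (he (fmap i) p) = he (fmap j) p) ->
    he th (u i) = u j.

(* alpha u = omega v in the limit (vertex families computed pointwise) *)
Definition composable {V A} (u v : family V A) : Prop :=
  forall i, ssrc (projT1 i) (u i) = stgt (projT1 i) (v i).

(* Open subsets of E(limit): initial topology of the projections onto the
   discrete finite semigroupoids. *)
Definition openE {V A} (W : family V A -> Prop) : Prop :=
  forall w, compat w -> W w ->
    exists Lw : list (fidx V A), forall w', compat w' ->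
      (forall i, In i Lw -> w' i = w i) -> W w'.

(* Open subsets of D(limit), with the subspace topology of E x E. *)
Definition openD {V A} (U : family V A -> family V A -> Prop) : Prop :=
  forall u v, compat u -> compat v -> composable u v -> U u v ->
    exists Lw : list (fidx V A), forall u' v', compat u' -> compat v' ->
      composable u' v' ->
      (forall i, In i Lw -> u' i = u i /\ v' i = v i) -> U u' v'.

Definition mul_image {V A} (U : family V A -> family V A -> Prop) :
  family V A -> Prop :=
  fun w => compat w /\ exists u v (hc : composable u v),
    compat u /\ compat v /\ U u v /\
    forall i, w i = smul (projT1 i) (u i) (v i) (hc i).

Definition multiplication_open (V : sgd -> Prop) (A : graph) : Prop :=
  forall U : family V A -> family V A -> Prop, openD U -> openE (mul_image U).

(* The free pro-V semigroupoid is the inverse limit of the onto morphisms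
   A^+ -> F with F in V; indices injective on vertices are cofinal, so A^+ is
   dense in it and an ultrafilter on A^+ converges in it (compactness).
   (1) => (2): over a finite-vertex graph, a morphism phi factors through the
   finite graph of edge types (range, source, phi-value), so phi-saturated
   languages are pullbacks of recognizable languages over a finite graph.
   (2) => (3): a basic open set of D is a product of fibers over L and K; every
   point near a product uv is a limit of products of words from L and K,
   because the concatenation LK is recognizable.
   (1) => N: finite languages are recognizable, and a finite nilpotent
   semigroup divides the local semigroup at the base vertex of any morphism
   separating the short loops of a graph whose loops spell words over it.
   (4) => (1): if LK were not recognizable, an ultrafilter limit of pairs
   separating LK is a product of limits from L and K, and openness puts a word
   outside LK in the image; a factorization of a word in the limit is an actual
   factorization, since a nilpotent quotient separates the short words. *)

From Pilot Require Import Defs.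
From Stdlib Require Import List ProofIrrelevance Classical ClassicalEpsilon Lia Arith.
From mathcomp Require ssreflect classical_sets filter.
Import ListNotations.

Section SemigroupoidFacts.
Variables S T : sgd.

Lemma smul_congr s s' t t' h h' :
  s = s' -> t = t' -> smul S s t h = smul S s' t' h'.
Proof. intros -> ->. f_equal. apply proof_irrelevance. Qed.

Lemma ssrc_smul : is_sgd S -> forall s t h, ssrc S (smul S s t h) = ssrc S t.
Proof. intros [H _]; apply H. Qed.

Lemma stgt_smul : is_sgd S -> forall s t h, stgt S (smul S s t h) = stgt S s.
Proof. intros [_ [H _]]; apply H. Qed.

Lemma smul_assoc : is_sgd S -> forall s t r h1 h2 h3 h4,
  smul S (smul S s t h1) r h3 = smul S s (smul S t r h2) h4.
Proof. intros [_ [_ [_ H]]]; apply H. Qed.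

Variable f : hom S T.
Hypothesis Hf : is_hom f.

Lemma ssrc_he e : ssrc T (he f e) = hv f (ssrc S e).
Proof. apply Hf. Qed.

Lemma stgt_he e : stgt T (he f e) = hv f (stgt S e).
Proof. apply Hf. Qed.

Lemma he_composable s t : ssrc S s = stgt S t -> ssrc T (he f s) = stgt T (he f t).
Proof. intro h. rewrite ssrc_he, stgt_he, h. reflexivity. Qed.

Lemma he_smul s t h h' : he f (smul S s t h) = smul T (he f s) (he f t) h'.
Proof. apply Hf. Qed.

End SemigroupoidFacts.

Arguments ssrc_he {S T} f. Arguments stgt_he {S T} f.
Arguments he_composable {S T} f. Arguments he_smul {S T} f.

Definition hid (S : sgd) : hom S S := Hom S S (fun x => x) (fun e => e).

Definition hcomp {S T R : sgd} (g : hom T R) (f : hom S T) : hom S R :=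
  Hom S R (fun x => hv g (hv f x)) (fun e => he g (he f e)).

Definition hpair {S T R : sgd} (f : hom S T) (g : hom S R) : hom S (prod_sgd T R) :=
  Hom S (prod_sgd T R) (fun x => (hv f x, hv g x)) (fun e => (he f e, he g e)).

Definition hunit (S : sgd) : hom S trivial_sgd :=
  Hom S trivial_sgd (fun _ => tt) (fun _ => tt).

Lemma hid_hom S : is_hom (hid S).
Proof. split; [|split]; simpl; intros; try reflexivity. apply smul_congr; auto. Qed.

Lemma hcomp_hom {S T R : sgd} (g : hom T R) (f : hom S T) :
  is_hom f -> is_hom g -> is_hom (hcomp g f).
Proof.
  intros Hf Hg. split; [|split]; simpl.
  - intro e. rewrite (ssrc_he g), (ssrc_he f); auto.
  - intro e. rewrite (stgt_he g), (stgt_he f); auto.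
  - intros s t h h'.
    rewrite (he_smul f Hf s t h (he_composable f Hf s t h)). apply (he_smul g Hg).
Qed.

Lemma hpair_hom {S T R : sgd} (f : hom S T) (g : hom S R) :
  is_hom f -> is_hom g -> is_hom (hpair f g).
Proof.
  intros Hf Hg. split; [|split]; simpl.
  - intro e. rewrite (ssrc_he f), (ssrc_he g); auto.
  - intro e. rewrite (stgt_he f), (stgt_he g); auto.
  - intros s t h h'. f_equal; [apply (he_smul f Hf)|apply (he_smul g Hg)].
Qed.

Lemma hunit_hom S : is_hom (hunit S).
Proof. split; [|split]; simpl; intros; reflexivity. Qed.

Lemma list_prod_full {X Y : Type} (l1 : list X) (l2 : list Y) :
  (forall x, In x l1) -> (forall y, In y l2) -> forall p, In p (list_prod l1 l2).
Proof. intros H1 H2 [x y]. apply in_prod; auto. Qed.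

Lemma sig_list {X : Type} (P : X -> Prop) (l : list X) :
  (forall x, P x -> In x l) -> exists ls : list (sig P), forall s, In s ls.
Proof.
  revert P. induction l as [|a l IH]; intros P H.
  - exists []. intros [x Hx]. destruct (H x Hx).
  - destruct (classic (P a)) as [Pa|nPa].
    + destruct (IH (fun x => P x /\ x <> a)) as [ls Hls].
      { intros x [Px nx]. destruct (H x Px); [congruence|auto]. }
      exists (exist P a Pa :: map (fun s => exist P (proj1_sig s) (proj1 (proj2_sig s))) ls).
      intros [x Hx]. destruct (classic (x = a)) as [->|nxa].
      * left. f_equal. apply proof_irrelevance.
      * right. apply in_map_iff. exists (exist _ x (conj Hx nxa)). split; auto.
        simpl. f_equal. apply proof_irrelevance.
    + apply IH. intros x Px. destruct (H x Px); [subst; contradiction|auto].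
Qed.

Lemma sig_list_on {X : Type} (P Q : X -> Prop) (l : list X) :
  (forall x, P x -> Q x -> In x l) ->
  exists ls : list (sig P), forall s, Q (proj1_sig s) -> In s ls.
Proof.
  intro H. destruct (sig_list (fun x => P x /\ Q x) l) as [ls Hls].
  { intros x [Px Qx]; auto. }
  exists (map (fun s => exist P (proj1_sig s) (proj1 (proj2_sig s))) ls).
  intros [x Px] Qx. apply in_map_iff. exists (exist _ x (conj Px Qx)). split; auto.
  simpl. f_equal. apply proof_irrelevance.
Qed.

Lemma sig_ext {X : Type} (P : X -> Prop) (x y : sig P) : proj1_sig x = proj1_sig y -> x = y.
Proof. destruct x, y; simpl; intros; subst; f_equal; apply proof_irrelevance. Qed.

Section Paths.
Variable A : graph.

Lemma path_ext (x y : pathE A) : proj1_sig x = proj1_sig y -> x = y.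
Proof. apply sig_ext. Qed.

Lemma plast_app e p f q : plast A e (p ++ f :: q) = plast A f q.
Proof. revert e; induction p; simpl; auto. Qed.

Lemma Aplus_sgd : is_sgd (Aplus A).
Proof.
  split; [|split; [|split]]; simpl.
  - intros s t h. unfold psrc, pmul; simpl. rewrite plast_app. reflexivity.
  - reflexivity.
  - intros; apply path_ext; reflexivity.
  - intros; apply path_ext; simpl. rewrite <- app_assoc. reflexivity.
Qed.

Lemma pmul_congr x x' y y' h h' : x = x' -> y = y' -> pmul A x y h = pmul A x' y' h'.
Proof. apply (smul_congr (Aplus A)). Qed.

Definition word (x : pathE A) : list (gE A) := fst (proj1_sig x) :: snd (proj1_sig x).

Lemma word_inj x y : word x = word y -> x = y.
Proof.
  intro H; apply path_ext. destruct x as [[e p] hx], y as [[f q] hy]; unfold word in H.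
  simpl in *. injection H; intros; subst; reflexivity.
Qed.

Lemma word_pmul x y h : word (pmul A x y h) = word x ++ word y.
Proof. reflexivity. Qed.

Lemma word_length x : 1 <= length (word x).
Proof. unfold word; simpl; lia. Qed.

Definition single (a : gE A) : pathE A := exist _ (a, []) I.

Lemma path_cons e g l (H : is_path A e (g :: l)) :
  exist (fun ep => is_path A (fst ep) (snd ep)) (e, g :: l) H =
  pmul A (single e) (exist _ (g, l) (proj2 H)) (proj1 H).
Proof. apply path_ext. reflexivity. Qed.

Lemma is_path_app_inv e p f q : is_path A e (p ++ f :: q) ->
  is_path A e p /\ gsrc A (plast A e p) = gtgt A f /\ is_path A f q.
Proof.
  revert e; induction p as [|g p IH]; simpl; intros e H.
  - destruct H; auto.
  - destruct H as [H1 H2]. destruct (IH g H2) as [? [? ?]]. auto.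
Qed.

End Paths.
Definition ultra {X : Type} (G : (X -> Prop) -> Prop) : Prop :=
  (forall P Q : X -> Prop, G P -> (forall x, P x -> Q x) -> G Q) /\
  (forall P Q : X -> Prop, G P -> G Q -> G (fun x => P x /\ Q x)) /\
  (~ G (fun _ => False)) /\
  (forall P : X -> Prop, G P \/ G (fun x => ~ P x)).

Section UltrafilterExistence.
Import ssreflect classical_sets filter.

Lemma ultra_of_list_family {I X : Type} (P : list I -> X -> Prop) :
  (forall T, exists x, P T x) ->
  (forall T1 T2 x, P (T1 ++ T2) x -> P T1 x /\ P T2 x) ->
  exists G : (X -> Prop) -> Prop, ultra G /\ forall T, G (P T).
Proof.
  move=> Hne Happ.
  pose F := fun Q : set X => exists T, forall x, P T x -> Q x.
  have PF : ProperFilter F.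
  { split.
    - move=> [T HT]. have [x Px] := Hne T. exact: (HT x Px).
    - split.
      + by exists nil.
      + move=> Q1 Q2 [T1 H1] [T2 H2]. exists (T1 ++ T2) => x Px.
        have [P1 P2] := Happ T1 T2 x Px. split; [exact: H1|exact: H2].
      + move=> Q1 Q2 Q12 [T HT]. exists T => x Px. exact: Q12 (HT x Px). }
  have [G [UG FG]] := ultraFilterLemma PF.
  exists G; split; last by move=> T; apply: FG; exists T.
  split; [|split; [|split]].
  - move=> Q1 Q2 GQ Q12. exact: (filterS Q12 GQ).
  - move=> Q1 Q2 G1 G2. exact: (filterI G1 G2).
  - move=> H. apply: (@filter_not_empty _ G). exact: H.
  - move=> Q. by have [h|h] := in_ultra_setVsetC Q UG; [left|right].
Qed.

End UltrafilterExistence.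

Section Ultrafilters.
Variable X : Type.
Variable G : (X -> Prop) -> Prop.
Hypothesis HG : ultra G.

Lemma ultra_mono P Q : G P -> (forall x, P x -> Q x) -> G Q.
Proof. apply HG. Qed.

Lemma ultra_and P Q : G P -> G Q -> G (fun x => P x /\ Q x).
Proof. apply HG. Qed.

Lemma ultra_ex P : G P -> exists x, P x.
Proof.
  intro H. apply NNPP. intro N. apply (proj1 (proj2 (proj2 HG))).
  apply (ultra_mono P); auto. intros x Px. apply N. eauto.
Qed.

Lemma ultra_true : G (fun _ => True).
Proof.
  destruct (proj2 (proj2 (proj2 HG)) (fun _ => True)) as [H|H]; auto.
  destruct (ultra_ex _ H) as [x Hx]. contradiction.
Qed.

Lemma ultra_forall_in {I : Type} (T : list I) (P : I -> X -> Prop) :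
  (forall i, In i T -> G (P i)) -> G (fun x => forall i, In i T -> P i x).
Proof.
  induction T as [|a T IH]; intro H.
  - apply (ultra_mono _ _ ultra_true). intros x _ i [].
  - apply (ultra_mono _ _ (ultra_and _ _ (H a (or_introl eq_refl))
                                       (IH (fun i Hi => H i (or_intror Hi))))).
    intros x [Ha Hb] i [<-|Hi]; auto.
Qed.

Lemma ultra_limit_ex {Y : Type} (fin : exists l : list Y, forall y, In y l) (f : X -> Y) :
  exists y, G (fun x => f x = y).
Proof.
  destruct fin as [l Hl].
  assert (H : G (fun x => In (f x) l)) by (apply (ultra_mono _ _ ultra_true); auto).
  clear Hl. induction l as [|a l IH].
  - destruct (ultra_ex _ H) as [x []].
  - destruct (proj2 (proj2 (proj2 HG)) (fun x => f x = a)) as [Ha|Ha]; [eauto|].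
    apply IH. apply (ultra_mono _ _ (ultra_and _ _ H Ha)).
    intros x [[E|E] N]; [congruence|auto].
Qed.

Lemma ultra_limit_unique {Y : Type} (f : X -> Y) y1 y2 :
  G (fun x => f x = y1) -> G (fun x => f x = y2) -> y1 = y2.
Proof. intros H1 H2. destruct (ultra_ex _ (ultra_and _ _ H1 H2)) as [x [E1 E2]]. congruence. Qed.

Definition ultra_limit {Y : Type} (fin : exists l : list Y, forall y, In y l) (f : X -> Y) : Y :=
  proj1_sig (constructive_indefinite_description _ (ultra_limit_ex fin f)).

Lemma ultra_limitP {Y : Type} fin (f : X -> Y) : G (fun x => f x = ultra_limit fin f).
Proof. unfold ultra_limit. destruct (constructive_indefinite_description _ _). auto. Qed.

End Ultrafilters.

(* The nilpotent semigroup of nonempty words of length at most [n] over [E],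
   with [None] as zero absorbing every longer product. *)
Section Truncation.
Variable E : Type.
Variable n : nat.

Definition short_word (o : option (list E)) : Prop :=
  match o with None => True | Some l => 1 <= length l <= n end.

Definition trunc_cat (o1 o2 : option (list E)) : option (list E) :=
  match o1, o2 with
  | Some l1, Some l2 => if Nat.leb (length (l1 ++ l2)) n then Some (l1 ++ l2) else None
  | _, _ => None
  end.

Lemma trunc_cat_short o1 o2 : short_word o1 -> short_word o2 -> short_word (trunc_cat o1 o2).
Proof.
  destruct o1 as [l1|], o2 as [l2|]; simpl; auto.
  intros H1 H2. destruct (Nat.leb_spec (length (l1 ++ l2)) n); simpl; auto.
  rewrite length_app in *. lia.
Qed.

Lemma trunc_cat_assoc a b c : trunc_cat (trunc_cat a b) c = trunc_cat a (trunc_cat b c).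
Proof.
  destruct a as [l1|], b as [l2|], c as [l3|]; simpl; auto.
  - repeat match goal with |- context [Nat.leb ?x ?y] => destruct (Nat.leb_spec x y) end;
    simpl; rewrite ?length_app in *; rewrite ?app_assoc; try reflexivity;
    repeat match goal with |- context [Nat.leb ?x ?y] => destruct (Nat.leb_spec x y) end;
    rewrite ?length_app in *; rewrite ?app_assoc; auto; lia.
  - destruct (Nat.leb (length (l1 ++ l2)) n); auto.
Qed.

Definition trunc_sgd : sgd :=
  Sgd unit (sig short_word) (fun _ => tt) (fun _ => tt)
    (fun s t _ => exist _ (trunc_cat (proj1_sig s) (proj1_sig t))
                          (trunc_cat_short _ _ (proj2_sig s) (proj2_sig t))).

Lemma trunc_is_sgd : is_sgd trunc_sgd.
Proof.
  split; [|split; [|split]]; simpl; intros; try reflexivity.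
  apply sig_ext, trunc_cat_assoc.
Qed.

Lemma trunc_one_vertex : one_vertex trunc_sgd.
Proof. exists tt. intros []; reflexivity. Qed.

Lemma is_prod_trunc f m w : is_prod trunc_sgd f m w ->
  proj1_sig w = None \/ exists l, proj1_sig w = Some l /\ m + 1 <= length l.
Proof.
  induction 1 as [|m w h Hp IH].
  - destruct (f 0) as [[l|] Hl]; simpl in *; [right; exists l; split; [auto|lia]|left; auto].
  - simpl. destruct IH as [E1|[l [E1 Hl]]]; rewrite E1; [left; auto|].
    destruct (f (S m)) as [[l2|] Hl2]; simpl in *; [|left; auto].
    destruct (Nat.leb_spec (length (l ++ l2)) n); [right|left; auto].
    exists (l ++ l2). rewrite length_app. split; [auto|lia].
Qed.

Lemma trunc_nilpotent : nilpotent trunc_sgd.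
Proof.
  exists (exist short_word None I), n. intros f w Hp. apply sig_ext; simpl.
  destruct (is_prod_trunc f n w Hp) as [H|[l [El Hl]]]; auto.
  destruct w as [o Ho]; simpl in *; subst. simpl in Ho. lia.
Qed.

Fixpoint words_upto (lE : list E) (m : nat) : list (list E) :=
  match m with
  | 0 => [[]]
  | S m => [] :: flat_map (fun e => map (cons e) (words_upto lE m)) lE
  end.

Lemma words_upto_full lE : (forall e, In e lE) ->
  forall m l, length l <= m -> In l (words_upto lE m).
Proof.
  intros HE m. induction m as [|m IH]; intros l Hl.
  - destruct l; simpl in *; [auto|lia].
  - destruct l as [|e l]; simpl; [auto|right].
    apply in_flat_map. exists e. split; auto. apply in_map. apply IH. simpl in Hl; lia.
Qed.

Lemma trunc_finite : (exists lE : list E, forall e, In e lE) -> finite_sgd trunc_sgd.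
Proof.
  intros [lE HE]. split.
  - exists [tt]. intros []; left; auto.
  - apply (sig_list short_word (None :: map Some (words_upto lE n))).
    intros [l|] Hl; [right|left; auto]. apply in_map. apply words_upto_full; auto.
    simpl in Hl; lia.
Qed.

End Truncation.

Section TruncatedPaths.
Variable A : graph.
Variable n : nat.

Definition trunc_path (x : pathE A) : option (list (gE A)) :=
  if Nat.leb (length (word A x)) n then Some (word A x) else None.

Lemma trunc_path_short x : short_word (gE A) n (trunc_path x).
Proof.
  unfold trunc_path. destruct (Nat.leb_spec (length (word A x)) n); simpl; auto.
  split; [apply word_length|auto].
Qed.

Definition trunc_hom : hom (Aplus A) (trunc_sgd (gE A) n) :=
  Hom (Aplus A) (trunc_sgd (gE A) n) (fun _ => tt)
    (fun x => exist _ (trunc_path x) (trunc_path_short x)).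

Lemma trunc_hom_hom : is_hom trunc_hom.
Proof.
  split; [|split]; simpl; intros; try reflexivity.
  apply sig_ext; simpl. unfold trunc_path. rewrite word_pmul.
  generalize (word A s) (word A t). intros l1 l2.
  destruct (Nat.leb_spec (length l1) n);
  destruct (Nat.leb_spec (length l2) n); unfold trunc_cat;
  destruct (Nat.leb_spec (length (l1 ++ l2)) n) as [H3|H3]; auto;
  rewrite length_app in H3; lia.
Qed.

Lemma trunc_hom_separates x z : length (word A z) <= n ->
  he trunc_hom x = he trunc_hom z -> x = z.
Proof.
  intros Hz E. apply (f_equal (@proj1_sig _ _)) in E. simpl in E. unfold trunc_path in E.
  rewrite (proj2 (Nat.leb_le _ _) Hz) in E.
  destruct (Nat.leb (length (word A x)) n); [|discriminate].
  apply word_inj. congruence.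
Qed.

End TruncatedPaths.

Section NilpotentProducts.
Variable Sg : sgd.
Hypothesis HS : is_sgd Sg.
Variable x0 : sV Sg.
Hypothesis Hone : forall y, y = x0.
Variable z : sE Sg.
Variable n : nat.
Hypothesis Hnil : forall f w, is_prod Sg f n w -> w = z.

Definition one_vertex_composable (s t : sE Sg) : ssrc Sg s = stgt Sg t :=
  eq_trans (Hone _) (eq_sym (Hone _)).

Definition omul (s t : sE Sg) : sE Sg := smul Sg s t (one_vertex_composable s t).

Lemma omul_assoc a b c : omul (omul a b) c = omul a (omul b c).
Proof. apply smul_assoc; auto. Qed.

Fixpoint oprod (acc : sE Sg) (l : list (sE Sg)) : sE Sg :=
  match l with [] => acc | t :: l => oprod (omul acc t) l end.

Lemma oprod_app acc l1 l2 : oprod acc (l1 ++ l2) = oprod (oprod acc l1) l2.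
Proof. revert acc; induction l1; simpl; auto. Qed.

Lemma omul_oprod a s l : omul a (oprod s l) = oprod (omul a s) l.
Proof.
  revert s; induction l as [|t l IH]; intro s; simpl; auto.
  rewrite IH, omul_assoc. reflexivity.
Qed.

Lemma is_prod_oprod : forall l acc m f, is_prod Sg f m acc ->
  (forall j, j < length l -> f (S (m + j)) = nth j l acc) ->
  is_prod Sg f (m + length l) (oprod acc l).
Proof.
  induction l as [|t l IH]; intros acc m f Hp Hf; simpl.
  - rewrite Nat.add_0_r. auto.
  - assert (Ef : f (S m) = t).
    { specialize (Hf 0). rewrite Nat.add_0_r in Hf. apply Hf. simpl; lia. }
    pose proof (is_prodS Sg f m acc (one_vertex_composable acc (f (S m))) Hp) as H1.
    rewrite Ef in H1.
    replace (m + S (length l)) with (S m + length l) by lia.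
    apply IH; auto.
    intros j Hj. replace (S (S m + j)) with (S (m + S j)) by lia.
    rewrite Hf by (simpl; lia). simpl. apply nth_indep. auto.
Qed.

Lemma oprod_exact s l : length l = n -> oprod s l = z.
Proof.
  intro Hl. apply (Hnil (fun k => nth k (s :: l) s)).
  rewrite <- Hl. apply (is_prod_oprod l s 0); [apply is_prod0|reflexivity].
Qed.

Lemma omul_zero t : omul z t = z.
Proof.
  rewrite <- (oprod_exact t (repeat t n)) at 1 by apply repeat_length.
  change (omul (oprod t (repeat t n)) t) with (oprod (oprod t (repeat t n)) [t]).
  rewrite <- oprod_app, <- repeat_cons. simpl. apply oprod_exact, repeat_length.
Qed.

Lemma oprod_zero l : oprod z l = z.
Proof. induction l; simpl; auto. rewrite omul_zero. auto. Qed.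

Lemma oprod_long s l : n <= length l -> oprod s l = z.
Proof.
  intro Hl. rewrite <- (firstn_skipn n l), oprod_app.
  rewrite (oprod_exact s (firstn n l)); [apply oprod_zero|]. rewrite length_firstn. lia.
Qed.

(* The edge [(false, s)] goes from [Some s] to the base vertex [None] and
   [(true, s)] back; loops at [None] spell words over [Sg] letter by letter. *)
Definition letter_graph : graph :=
  Graph (option (sE Sg)) (bool * sE Sg)
    (fun e => if fst e then None else Some (snd e))
    (fun e => if fst e then Some (snd e) else None).

Lemma letter_graph_finite : finite_sgd Sg -> finite_graph letter_graph.
Proof.
  intros [_ [lS HlS]]. split.
  - exists (None :: map Some lS). intros [s|]; [right; apply in_map; auto|left; auto].
  - exists (list_prod [true; false] lS). intros [b s]. apply in_prod; auto.
    destruct b; simpl; auto.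
Qed.

Lemma letter_graph_simple (e e' : gE letter_graph) :
  gtgt letter_graph e = gtgt letter_graph e' -> gsrc letter_graph e = gsrc letter_graph e' -> e = e'.
Proof. destruct e as [[|] s], e' as [[|] s']; simpl; intros; congruence. Qed.

Definition letters (l : list (bool * sE Sg)) : list (sE Sg) :=
  map snd (filter (fun e => negb (fst e)) l).

Lemma letters_app l1 l2 : letters (l1 ++ l2) = letters l1 ++ letters l2.
Proof. unfold letters. rewrite filter_app, map_app. reflexivity. Qed.

(* Letter edges and return edges alternate along a path. *)
Lemma length_letters : forall l e, is_path letter_graph e l ->
  (fst e = false -> length (e :: l) <= 2 * length (letters (e :: l))) /\
  (fst e = true -> length (e :: l) <= 2 * length (letters (e :: l)) + 1).
Proof.
  induction l as [|g l IH]; intros [b s] H.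
  - split; intro E; simpl in E; subst; simpl; lia.
  - destruct H as [H1 H2]. destruct (IH g H2) as [IH1 IH2]. destruct g as [b' s'].
    split; intro E; simpl in E; subst b; simpl in H1.
    + destruct b'; simpl in H1; [|discriminate]. specialize (IH2 eq_refl).
      unfold letters in *; simpl in *. lia.
    + destruct b'; simpl in H1; [discriminate|]. specialize (IH1 eq_refl).
      unfold letters in *; simpl in *. lia.
Qed.

Definition base_loop (d : pathE letter_graph) :=
  ptgt letter_graph d = None /\ psrc letter_graph d = None.

(* Only meaningful on base loops, whose letter list is nonempty. *)
Definition loop_value (d : pathE letter_graph) : sE Sg :=
  match letters (word letter_graph d) with
  | [] => snd (fst (proj1_sig d))
  | s :: l => oprod s l
  end.

Lemma base_loop_letters d : base_loop d -> exists s l,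
  letters (word letter_graph d) = s :: l /\ length (word letter_graph d) <= 2 * length (s :: l).
Proof.
  intros [H _]. destruct d as [[[b s] l] Hd]. unfold ptgt in H; simpl in *.
  destruct b; [discriminate|].
  exists s, (letters l). split; [reflexivity|].
  apply (proj1 (length_letters l (false, s) Hd)). reflexivity.
Qed.

Lemma loop_value_long d : base_loop d -> 2 * n + 2 <= length (word letter_graph d) ->
  loop_value d = z.
Proof.
  intros H Hl. destruct (base_loop_letters d H) as [s [l [E Hle]]].
  unfold loop_value. rewrite E. apply oprod_long.
  change (length (s :: l)) with (S (length l)) in Hle. lia.
Qed.

Lemma loop_value_pmul d1 d2 h : base_loop d1 -> base_loop d2 ->
  loop_value (pmul letter_graph d1 d2 h) = omul (loop_value d1) (loop_value d2).
Proof.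
  intros H1 H2. destruct (base_loop_letters d1 H1) as [s1 [l1 [E1 _]]].
  destruct (base_loop_letters d2 H2) as [s2 [l2 [E2 _]]].
  unfold loop_value. rewrite word_pmul, letters_app, E1, E2. simpl.
  rewrite oprod_app. simpl. rewrite omul_oprod. reflexivity.
Qed.

Definition letter_loop (s : sE Sg) : pathE letter_graph :=
  exist (fun ep => is_path letter_graph (fst ep) (snd ep)) ((false, s), [(true, s)])
    (conj eq_refl Logic.I).

End NilpotentProducts.

Section LocalSemigroup.
Variable T : sgd.
Hypothesis HT : is_sgd T.
Variable v : sV T.

Definition loop_at := {e : sE T | ssrc T e = v /\ stgt T e = v}.

Lemma loop_at_composable (e1 e2 : loop_at) : ssrc T (proj1_sig e1) = stgt T (proj1_sig e2).
Proof. rewrite (proj1 (proj2_sig e1)), (proj2 (proj2_sig e2)). reflexivity. Qed.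

Lemma loop_at_mul (e1 e2 : loop_at) :
  ssrc T (smul T _ _ (loop_at_composable e1 e2)) = v /\
  stgt T (smul T _ _ (loop_at_composable e1 e2)) = v.
Proof.
  rewrite ssrc_smul, stgt_smul; auto. split; [apply (proj2_sig e2)|apply (proj2_sig e1)].
Qed.

Definition local_sgd : sgd :=
  Sgd unit loop_at (fun _ => tt) (fun _ => tt) (fun e1 e2 _ => exist _ _ (loop_at_mul e1 e2)).

Definition local_incl : hom local_sgd T := Hom local_sgd T (fun _ => v) (@proj1_sig _ _).

Lemma local_is_sgd : is_sgd local_sgd.
Proof.
  split; [|split; [|split]]; simpl; intros; try reflexivity.
  apply sig_ext, smul_assoc; auto.
Qed.

Lemma local_incl_hom : is_hom local_incl.
Proof.
  split; [|split]; simpl.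
  - intro e; apply (proj2_sig e).
  - intro e; apply (proj2_sig e).
  - intros; apply smul_congr; auto.
Qed.

Lemma local_incl_faithful : faithful local_incl.
Proof. intros e e' _ _. apply sig_ext. Qed.

End LocalSemigroup.
Section Pseudovariety.
Variable V : sgd -> Prop.
Hypothesis HV : pseudovariety V.

Lemma V_is_sgd S : V S -> is_sgd S.
Proof. intro h; apply (proj1 HV S h). Qed.

Lemma V_finite S : V S -> finite_sgd S.
Proof. intro h; apply (proj1 HV S h). Qed.

Lemma V_divisor S T : V T -> is_sgd S -> finite_sgd S -> divides S T -> V S.
Proof. apply HV. Qed.

Lemma V_trivial : V trivial_sgd.
Proof. apply HV. Qed.

Lemma V_prod S T : V S -> V T -> V (prod_sgd S T).
Proof. apply HV. Qed.

Lemma V_sub S T (f : hom S T) : V T -> is_sgd S -> finite_sgd S -> is_hom f ->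
  faithful f -> V S.
Proof.
  intros HT HS HSf Hf Hfaith. apply (V_divisor S T HT HS HSf).
  exists S, f, (hid S). do 4 (split; auto using hid_hom).
  split; [|split]; simpl; eauto.
Qed.

Section Recognizable.
Variable A : graph.

Definition saturates {F} (phi : hom (Aplus A) F) (L : lang A) :=
  forall u v, he phi u = he phi v -> L u -> L v.

Definition ker_sub {F G} (phi : hom (Aplus A) F) (psi : hom (Aplus A) G) :=
  forall u v, he phi u = he phi v -> he psi u = he psi v.

Lemma recognizable_of_saturates F (phi : hom (Aplus A) F) L :
  V F -> is_hom phi -> saturates phi L -> recognizable V A L.
Proof.
  intros HF Hp Hs. exists F, phi. do 2 (split; auto). split.
  - intro Lu; exists u; auto.
  - intros [v [Lv e]]. apply (Hs v u e Lv).
Qed.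

Lemma saturates_of_recognizable L : recognizable V A L ->
  exists F (phi : hom (Aplus A) F), V F /\ is_hom phi /\ saturates phi L.
Proof.
  intros [F [phi [HF [Hp H]]]]. exists F, phi. do 2 (split; auto).
  intros u v e Lu. apply H. exists u. auto.
Qed.

Lemma saturates_ker_sub {F G} (phi : hom (Aplus A) F) (psi : hom (Aplus A) G) L :
  ker_sub phi psi -> saturates psi L -> saturates phi L.
Proof. intros Hk Hs u v e. apply Hs. apply Hk; auto. Qed.

Lemma ker_sub_hpair_l {F G} (phi : hom (Aplus A) F) (psi : hom (Aplus A) G) :
  ker_sub (hpair phi psi) phi.
Proof. intros u v e. injection e; auto. Qed.

Lemma ker_sub_hpair_r {F G} (phi : hom (Aplus A) F) (psi : hom (Aplus A) G) :
  ker_sub (hpair phi psi) psi.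
Proof. intros u v e. injection e; auto. Qed.

Lemma saturates_common (Ls : list (lang A)) :
  (forall L, In L Ls -> recognizable V A L) ->
  exists F (phi : hom (Aplus A) F), V F /\ is_hom phi /\
    forall L, In L Ls -> saturates phi L.
Proof.
  induction Ls as [|L Ls IH]; intro H.
  - exists trivial_sgd, (hunit _). do 2 (split; auto using V_trivial, hunit_hom).
    intros L [].
  - destruct IH as [F [phi [HF [Hp Hs]]]]. { intros; apply H; right; auto. }
    destruct (saturates_of_recognizable L) as [G [psi [HG [Hq Hs']]]]. { apply H; left; auto. }
    exists (prod_sgd G F), (hpair psi phi).
    do 2 (split; auto using V_prod, hpair_hom).
    intros K [<-|HK].
    + apply (saturates_ker_sub _ psi); auto using ker_sub_hpair_l.
    + apply (saturates_ker_sub _ phi); auto using ker_sub_hpair_r.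
Qed.

Lemma recognizable_ext L K : (forall x, L x <-> K x) ->
  recognizable V A L -> recognizable V A K.
Proof.
  intros E H. destruct (saturates_of_recognizable L H) as [F [phi [HF [Hp Hs]]]].
  apply (recognizable_of_saturates F phi); auto.
  intros u v e Ku. apply E. apply (Hs u v e). apply E; auto.
Qed.

Lemma recognizable_full : recognizable V A (fun _ => True).
Proof.
  apply (recognizable_of_saturates _ (hunit _)); auto using V_trivial, hunit_hom.
  intros u v _ _; exact I.
Qed.

Lemma recognizable_compl L : recognizable V A L -> recognizable V A (fun x => ~ L x).
Proof.
  intro H; destruct (saturates_of_recognizable L H) as [F [phi [HF [Hp Hs]]]].
  apply (recognizable_of_saturates F phi); auto.
  intros u v e nu Lv. apply nu. apply (Hs v u); auto.
Qed.

Lemma recognizable_inter L K : recognizable V A L -> recognizable V A K ->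
  recognizable V A (fun x => L x /\ K x).
Proof.
  intros HL HK. destruct (saturates_common [L; K]) as [F [phi [HF [Hp Hs]]]].
  { intros M [<-|[<-|[]]]; auto. }
  apply (recognizable_of_saturates F phi); auto. intros u v e [Lu Ku]. split.
  - apply (Hs L (or_introl eq_refl) u v e Lu).
  - apply (Hs K (or_intror (or_introl eq_refl)) u v e Ku).
Qed.

Lemma fidx_V (i : fidx V A) : V (projT1 i).
Proof. apply (proj2_sig (projT2 i)). Qed.

Lemma fidx_hom (i : fidx V A) : is_hom (fmap i).
Proof. apply (proj2_sig (projT2 i)). Qed.

Lemma fidx_onto (i : fidx V A) : onto (fmap i).
Proof. apply (proj2_sig (projT2 i)). Qed.

Lemma fidx_is_sgd (i : fidx V A) : is_sgd (projT1 i).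
Proof. apply V_is_sgd, fidx_V. Qed.

Lemma fidx_common_refinement (T : list (fidx V A)) :
  exists F (phi : hom (Aplus A) F), V F /\ is_hom phi /\
    forall i, In i T -> ker_sub phi (fmap i).
Proof.
  induction T as [|i T IH].
  - exists trivial_sgd, (hunit _). do 2 (split; auto using V_trivial, hunit_hom).
    intros i [].
  - destruct IH as [F [phi [HF [Hp Hs]]]].
    exists (prod_sgd (projT1 i) F), (hpair (fmap i) phi).
    do 2 (split; auto using V_prod, fidx_V, hpair_hom, fidx_hom).
    intros j [<-|Hj]; [apply ker_sub_hpair_l|].
    intros u v e. apply (Hs j Hj). apply (ker_sub_hpair_r (fmap i) phi); auto.
Qed.

Definition complete_sgd : sgd :=
  Sgd (gV A) (gV A * gV A) snd fst (fun p q _ => (fst p, snd q)).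

Definition endpoints : hom (Aplus A) complete_sgd :=
  Hom (Aplus A) complete_sgd (fun x => x) (fun p => (ptgt A p, psrc A p)).

Lemma endpoints_hom : is_hom endpoints.
Proof.
  split; [|split]; simpl; intros; try reflexivity.
  f_equal. apply (ssrc_smul _ (Aplus_sgd A)).
Qed.

Lemma complete_sgd_V : finite_vertex_graph A -> V complete_sgd.
Proof.
  intros [l Hl]. apply (V_divisor complete_sgd trivial_sgd V_trivial).
  - split; [|split; [|split]]; simpl; intros; reflexivity.
  - split; [exists l; auto|exists (list_prod l l); apply list_prod_full; auto].
  - exists complete_sgd, (hunit _), (hid _).
    split; [split; [|split; [|split]]; simpl; intros; reflexivity|].
    do 3 (split; auto using hunit_hom, hid_hom).
    + intros [a b] [c d] e1 e2 _; simpl in *; subst; reflexivity.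
    + split; [|split]; simpl; eauto.
Qed.

Definition vinj (i : fidx V A) := forall x y, hv (fmap i) x = hv (fmap i) y -> x = y.

(* Injectivity on vertices makes the image of [psi] closed under multiplication. *)
Section Image.
Variable T : sgd.
Hypothesis HT : V T.
Variable psi : hom (Aplus A) T.
Hypothesis Hpsi : is_hom psi.
Hypothesis Hinj : forall x y, hv psi x = hv psi y -> x = y.

Definition imV := {t : sV T | exists x, hv psi x = t}.
Definition imE := {e : sE T | exists d, he psi d = e}.

Lemma im_src_pf (e : imE) : exists x, hv psi x = ssrc T (proj1_sig e).
Proof. destruct e as [e [d <-]]. exists (psrc A d). symmetry; apply (ssrc_he psi Hpsi). Qed.

Lemma im_tgt_pf (e : imE) : exists x, hv psi x = stgt T (proj1_sig e).
Proof. destruct e as [e [d <-]]. exists (ptgt A d). symmetry; apply (stgt_he psi Hpsi). Qed.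

Lemma im_mul_pf (e1 e2 : imE) (h : ssrc T (proj1_sig e1) = stgt T (proj1_sig e2)) :
  exists d, he psi d = smul T (proj1_sig e1) (proj1_sig e2) h.
Proof.
  destruct e1 as [e1 [d1 <-]], e2 as [e2 [d2 <-]]; simpl in *.
  assert (hd : psrc A d1 = ptgt A d2).
  { apply Hinj. exact (eq_trans (eq_sym (ssrc_he psi Hpsi _)) (eq_trans h (stgt_he psi Hpsi _))). }
  exists (pmul A d1 d2 hd). apply (he_smul psi Hpsi (d1 : sE (Aplus A))).
Qed.

Definition image_sgd : sgd :=
  Sgd imV imE
    (fun e => exist _ _ (im_src_pf e)) (fun e => exist _ _ (im_tgt_pf e))
    (fun e1 e2 h => exist _ _ (im_mul_pf e1 e2 (f_equal (@proj1_sig _ _) h))).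

Definition image_incl : hom image_sgd T :=
  Hom image_sgd T (@proj1_sig _ _) (@proj1_sig _ _).

Lemma image_sgd_V : V image_sgd.
Proof.
  pose proof (V_is_sgd T HT) as HS.
  apply (V_sub image_sgd T image_incl HT).
  - split; [|split; [|split]]; simpl; intros; apply sig_ext; simpl.
    + apply ssrc_smul; auto.
    + apply stgt_smul; auto.
    + apply smul_congr; auto.
    + apply smul_assoc; auto.
  - destruct (V_finite T HT) as [[lv Hv] [le He]].
    split; [apply (sig_list _ lv)|apply (sig_list _ le)]; auto.
  - split; [|split]; simpl; intros; try reflexivity. apply smul_congr; auto.
  - intros e e' _ _. apply sig_ext.
Qed.

Definition onto_image : hom (Aplus A) image_sgd :=
  Hom (Aplus A) image_sgd (fun x => exist _ (hv psi x) (ex_intro _ x eq_refl))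
    (fun d => exist _ (he psi d) (ex_intro _ d eq_refl)).

Lemma onto_image_hom : is_hom onto_image.
Proof.
  split; [|split]; simpl; intros; apply sig_ext; simpl.
  - apply (ssrc_he psi Hpsi).
  - apply (stgt_he psi Hpsi).
  - apply (he_smul psi Hpsi).
Qed.

Lemma onto_image_onto : onto onto_image.
Proof.
  split; [intros [y [x <-]]|intros [e [d <-]]]; eexists; apply sig_ext; reflexivity.
Qed.

Definition image_fidx : fidx V A :=
  existT _ image_sgd
    (exist _ onto_image (conj image_sgd_V (conj onto_image_hom onto_image_onto))).

End Image.

Hypothesis Afv : finite_vertex_graph A.

(* Pairing with [endpoints] makes the vertex map injective, so the image is an index. *)
Lemma vinj_refinement F (phi : hom (Aplus A) F) : V F -> is_hom phi ->
  exists i : fidx V A, vinj i /\ ker_sub (fmap i) phi.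
Proof.
  intros HF Hp.
  set (psi := hpair endpoints phi).
  assert (Hpsi : is_hom psi) by (apply hpair_hom; auto using endpoints_hom).
  assert (Hinj : forall x y, hv psi x = hv psi y -> x = y).
  { intros x y e. injection e; auto. }
  exists (image_fidx _ (V_prod _ _ (complete_sgd_V Afv) HF) psi Hpsi Hinj). split.
  - intros x y e. apply Hinj. apply (f_equal (@proj1_sig _ _) e).
  - intros u v e. apply (f_equal (@proj1_sig _ _)) in e. injection e; auto.
Qed.

Lemma vinj_saturates L : recognizable V A L ->
  exists i : fidx V A, vinj i /\ saturates (fmap i) L.
Proof.
  intro H. destruct (saturates_of_recognizable L H) as [F [phi [HF [Hp Hs]]]].
  destruct (vinj_refinement F phi HF Hp) as [i [Hi Hk]].
  exists i; split; eauto using saturates_ker_sub.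
Qed.

End Recognizable.

Section ProfiniteLimit.
Variable A : graph.

Definition principal (x : pathE A) : family V A := fun i => he (fmap i) x.

Lemma principal_compat x : compat (principal x).
Proof. intros i j th Hth Hv He. apply He. Qed.

Lemma factor_through_vinj (i j : fidx V A) :
  vinj A i -> ker_sub A (fmap i) (fmap j) ->
  exists th : hom (projT1 i) (projT1 j), is_hom th /\
    (forall x, hv th (hv (fmap i) x) = hv (fmap j) x) /\
    (forall p, he th (he (fmap i) p) = he (fmap j) p).
Proof.
  intros Hi Hk.
  destruct (fidx_onto A i) as [ov oe].
  pose (pv := fun y => proj1_sig (constructive_indefinite_description _ (ov y))).
  pose (pe := fun e => proj1_sig (constructive_indefinite_description _ (oe e))).
  assert (Hpv : forall y, hv (fmap i) (pv y) = y).
  { intro y. unfold pv. destruct (constructive_indefinite_description _ _); auto. }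
  assert (Hpe : forall e, he (fmap i) (pe e) = e).
  { intro e. unfold pe. destruct (constructive_indefinite_description _ _); auto. }
  pose proof (fidx_hom A i) as Hfi. pose proof (fidx_hom A j) as Hfj.
  assert (Cv : forall x, hv (fmap j) (pv (hv (fmap i) x)) = hv (fmap j) x).
  { intro x. f_equal. apply Hi. apply Hpv. }
  assert (Ce : forall p, he (fmap j) (pe (he (fmap i) p)) = he (fmap j) p).
  { intro p. apply Hk. apply Hpe. }
  exists (Hom _ _ (fun y => hv (fmap j) (pv y)) (fun e => he (fmap j) (pe e))).
  split; [|split; simpl; auto].
  split; [|split]; simpl.
  - intro e. rewrite (ssrc_he _ Hfj). rewrite <- (Hpe e) at 2. rewrite (ssrc_he _ Hfi). auto.
  - intro e. rewrite (stgt_he _ Hfj). rewrite <- (Hpe e) at 2. rewrite (stgt_he _ Hfi). auto.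
  - intros s t h h'.
    destruct (oe s) as [d1 <-], (oe t) as [d2 <-].
    assert (hd : ssrc (Aplus A) d1 = stgt (Aplus A) d2).
    { apply Hi. rewrite <- (ssrc_he _ Hfi), <- (stgt_he _ Hfi). exact h. }
    rewrite <- (he_smul _ Hfi d1 d2 hd h), Ce, (he_smul _ Hfj d1 d2 hd (he_composable _ Hfj _ _ hd)).
    apply smul_congr; symmetry; apply Ce.
Qed.

Lemma density (w : family V A) : finite_vertex_graph A -> compat w ->
  forall T : list (fidx V A), exists z, forall i, In i T -> he (fmap i) z = w i.
Proof.
  intros Afv Hw T.
  destruct (fidx_common_refinement A T) as [F [phi [HF [Hp Hs]]]].
  destruct (vinj_refinement A Afv F phi HF Hp) as [m [Hm Hk]].
  destruct (proj2 (fidx_onto A m) (w m)) as [z Hz].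
  exists z. intros i Hi.
  destruct (factor_through_vinj m i Hm) as [th [Hth [Hv He]]].
  { intros u v e. apply (Hs i Hi). apply Hk; auto. }
  rewrite <- (Hw m i th Hth Hv He), <- Hz. symmetry; apply He.
Qed.

Section UltraLimit.
Variable X : Type.
Variable G : (X -> Prop) -> Prop.
Hypothesis HG : ultra G.

Definition ulim_path (f : X -> pathE A) : family V A :=
  fun i => ultra_limit X G HG (proj2 (V_finite _ (fidx_V A i))) (fun x => he (fmap i) (f x)).

Lemma ulim_pathP f i : G (fun x => he (fmap i) (f x) = ulim_path f i).
Proof. exact (ultra_limitP X G HG _ (fun x => he (fmap i) (f x))). Qed.

Lemma ulim_path_in f T : G (fun x => forall i, In i T -> he (fmap i) (f x) = ulim_path f i).
Proof. apply (ultra_forall_in X G HG T (fun i x => _ = _)). intros; apply ulim_pathP. Qed.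

Lemma ulim_path_compat f : compat (ulim_path f).
Proof.
  intros i j th Hth Hv He.
  apply (ultra_limit_unique X G HG (fun x => he (fmap j) (f x))); [|apply ulim_pathP].
  apply (ultra_mono X G HG _ _ (ulim_pathP f i)). intros x <-. symmetry; apply He.
Qed.

Lemma ulim_path_composable f g : G (fun x => psrc A (f x) = ptgt A (g x)) ->
  composable (ulim_path f) (ulim_path g).
Proof.
  intros H i.
  destruct (ultra_ex X G HG _ (ultra_and X G HG _ _ H
             (ultra_and X G HG _ _ (ulim_pathP f i) (ulim_pathP g i)))) as [x [h [<- <-]]].
  apply (he_composable _ (fidx_hom A i)). exact h.
Qed.

Lemma ulim_path_mul f g (hc : composable (ulim_path f) (ulim_path g)) (w : family V A) i :
  G (fun x => exists h, he (fmap i) (pmul A (f x) (g x) h) = w i) ->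
  w i = smul _ (ulim_path f i) (ulim_path g i) (hc i).
Proof.
  intro H.
  destruct (ultra_ex X G HG _ (ultra_and X G HG _ _ H
             (ultra_and X G HG _ _ (ulim_pathP f i) (ulim_pathP g i))))
    as [x [[h <-] [Ef Eg]]].
  etransitivity; [apply (he_smul _ (fidx_hom A i) (f x : sE (Aplus A)) (g x) h
                           (he_composable _ (fidx_hom A i) _ _ h))|].
  apply smul_congr; auto.
Qed.

End UltraLimit.
End ProfiniteLimit.

Definition fiber {A : graph} (S : list (fidx V A)) (c : family V A) : lang A :=
  fun x => forall s, In s S -> he (fmap s) x = c s.

Lemma recognizable_fiber A (S : list (fidx V A)) (c : family V A) :
  recognizable V A (fiber S c).
Proof.
  induction S as [|s S IH].
  - apply (recognizable_ext A (fun _ => True)); [|apply recognizable_full].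
    intro x; split; auto. intros _ s [].
  - assert (Hs : recognizable V A (fun x => he (fmap s) x = c s)).
    { apply (recognizable_of_saturates A _ (fmap s)); auto using fidx_V, fidx_hom.
      intros u v e E; congruence. }
    refine (recognizable_ext A _ _ _ (recognizable_inter A _ _ Hs IH)).
    intro x; split.
    + intros [H1 H2] t [<-|Ht]; auto.
    + intro H; split; [apply H; left|intros t Ht; apply H; right]; auto.
Qed.

Section Openness.
Variable A : graph.
Hypothesis Afv : finite_vertex_graph A.
Hypothesis Hcc : recog_concat_closed V A.

(* Every neighbourhood of [w'] meets the image of [fiber S u0 x fiber S v0]:
   the index [k] recognizing the concatenation identifies [w'] with [u0 v0]. *)
Lemma fiber_products_dense (S : list (fidx V A)) (u0 v0 w' : family V A)
    (hc : composable u0 v0) (k : fidx V A) :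
  compat u0 -> compat v0 -> compat w' -> vinj A k ->
  saturates A (fmap k) (Defs.concat A (fiber S u0) (fiber S v0)) ->
  w' k = smul _ (u0 k) (v0 k) (hc k) ->
  forall T, exists x y h, fiber S u0 x /\ fiber S v0 y /\
    forall i, In i T -> he (fmap i) (pmul A x y h) = w' i.
Proof.
  intros Hu0 Hv0 Hw' Hk Hsk Ewk T.
  pose proof (fidx_hom A k) as Hfk.
  destruct (density A w' Afv Hw' (k :: T)) as [z Hz].
  destruct (density A u0 Afv Hu0 (k :: S)) as [x0 Hx0].
  destruct (density A v0 Afv Hv0 (k :: S)) as [y0 Hy0].
  assert (h0 : ssrc (Aplus A) x0 = stgt (Aplus A) y0).
  { apply Hk. rewrite <- (ssrc_he _ Hfk), <- (stgt_he _ Hfk).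
    rewrite (Hx0 k (or_introl eq_refl)), (Hy0 k (or_introl eq_refl)). apply hc. }
  assert (Cz : Defs.concat A (fiber S u0) (fiber S v0) z).
  { apply (Hsk (smul (Aplus A) x0 y0 h0)).
    - rewrite (he_smul _ Hfk _ _ h0 (he_composable _ Hfk _ _ h0)).
      rewrite (Hz k (or_introl eq_refl)), Ewk.
      apply smul_congr; [apply Hx0|apply Hy0]; left; auto.
    - exists x0, y0, h0. split; [|split; auto]; intros s Hs; [apply Hx0|apply Hy0]; right; auto. }
  destruct Cz as [x [y [h [Lx [Ky ->]]]]].
  exists x, y, h. split; [auto|split; [auto|]].
  intros i Hi. apply (Hz i (or_intror Hi)).
Qed.

Lemma multiplication_open_of_recog_concat_closed : multiplication_open V A.
Proof.
  intros U HU w Hw [_ [u0 [v0 [hc [Hu0 [Hv0 [HU0 Hprod]]]]]]].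
  destruct (HU u0 v0 Hu0 Hv0 hc HU0) as [S HS].
  destruct (vinj_saturates A Afv _ (Hcc _ _ (recognizable_fiber A S u0)
                                            (recognizable_fiber A S v0))) as [k [Hk Hsk]].
  exists (k :: S). intros w' Hw' Hag.
  set (P := fun T (p : pathE A * pathE A) => fiber S u0 (fst p) /\ fiber S v0 (snd p) /\
              exists h, forall i, In i T -> he (fmap i) (pmul A (fst p) (snd p) h) = w' i).
  destruct (ultra_of_list_family P) as [G [HG GP]].
  { intro T. destruct (fiber_products_dense S u0 v0 w' hc k Hu0 Hv0 Hw' Hk Hsk) with T
      as [x [y [h H]]].
    - rewrite (Hag k (or_introl eq_refl)). apply Hprod.
    - exists (x, y). unfold P; simpl. intuition eauto. }
  { intros T1 T2 p [L1 [K2 [h H]]].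
    split; (split; [auto|split; [auto|exists h]]); intros i Hi; apply H, in_or_app; auto. }
  set (u' := ulim_path A _ G HG fst). set (v' := ulim_path A _ G HG snd).
  assert (hc' : composable u' v').
  { apply ulim_path_composable. apply (ultra_mono _ G HG _ _ (GP [])).
    intros p [_ [_ [h _]]]. exact h. }
  split; [exact Hw'|]. exists u', v', hc'.
  split; [apply ulim_path_compat|split; [apply ulim_path_compat|split]].
  - apply HS; [apply ulim_path_compat|apply ulim_path_compat|exact hc'|].
    intros i Hi. unfold u', v'. split.
    + destruct (ultra_ex _ G HG _ (ultra_and _ G HG _ _ (ulim_pathP A _ G HG fst i) (GP [])))
        as [p [<- [Lp _]]]. auto.
    + destruct (ultra_ex _ G HG _ (ultra_and _ G HG _ _ (ulim_pathP A _ G HG snd i) (GP [])))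
        as [p [<- [_ [Kp _]]]]. auto.
  - intro i. apply ulim_path_mul. apply (ultra_mono _ G HG _ _ (GP [i])).
    intros p [_ [_ [h H]]]. exists h. apply H. left; auto.
Qed.

End Openness.

Lemma ker_sub_trans A {F G H} (phi : hom (Aplus A) F) (psi : hom (Aplus A) G)
    (chi : hom (Aplus A) H) :
  ker_sub A phi psi -> ker_sub A psi chi -> ker_sub A phi chi.
Proof. intros H1 H2 u v e. auto. Qed.

Lemma not_recognizable_separated A (L : lang A) : ~ recognizable V A L ->
  forall T : list (fidx V A), exists z z', L z /\ ~ L z' /\
    forall i, In i T -> he (fmap i) z = he (fmap i) z'.
Proof.
  intros NR T. apply NNPP; intro N. apply NR.
  destruct (fidx_common_refinement A T) as [F [phi [HF [Hp Hs]]]].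
  apply (recognizable_of_saturates A F phi L HF Hp). intros u v e Lu.
  apply NNPP; intro nv. apply N. exists u, v. split; [auto|split; [auto|]].
  intros i Hi. apply (Hs i Hi); auto.
Qed.

Definition factor_box {A} (L K : lang A) (a b : fidx V A) (u v : family V A) : Prop :=
  (exists x, L x /\ u a = he (fmap a) x) /\ (exists y, K y /\ v b = he (fmap b) y).

Lemma factor_box_open A (L K : lang A) a b : openD (factor_box L K a b).
Proof.
  intros u1 v1 _ _ _ [[x [Lx Ex]] [y [Ky Ey]]]. exists [a; b].
  intros u' v' _ _ _ Hag. split.
  - exists x. rewrite (proj1 (Hag a (or_introl eq_refl))); auto.
  - exists y. rewrite (proj2 (Hag b (or_intror (or_introl eq_refl)))); auto.
Qed.

Definition concat_split {A} (L K : lang A) (z : pathE A) : pathE A * pathE A :=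
  epsilon (inhabits (z, z)) (fun q => exists h : psrc A (fst q) = ptgt A (snd q),
                                     L (fst q) /\ K (snd q) /\ z = pmul A (fst q) (snd q) h).

Lemma concat_splitP A (L K : lang A) z : Defs.concat A L K z ->
  exists h, L (fst (concat_split L K z)) /\ K (snd (concat_split L K z)) /\
            z = pmul A (fst (concat_split L K z)) (snd (concat_split L K z)) h.
Proof.
  intros [u [v [h [Lu [Kv E]]]]]. unfold concat_split. apply epsilon_spec.
  exists (u, v), h. auto.
Qed.

Section ConcatFromOpenness.
Variable A : graph.
Hypothesis Afin : finite_graph A.
Hypothesis HN : containsN V.

Lemma trunc_sgd_V n : V (trunc_sgd (gE A) n).
Proof.
  apply HN; auto using trunc_is_sgd, trunc_one_vertex, trunc_nilpotent.
  apply trunc_finite, (proj2 Afin).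
Qed.

(* A factorization of a word [z] in the limit is realised by an actual
   factorization: a vertex-injective index refining [a], [b] and the
   truncation at length |z| reflects the product [z]. *)
Lemma concat_of_principal_factor (L K : lang A) (a b : fidx V A) :
  saturates A (fmap a) L -> saturates A (fmap b) K ->
  forall z u1 v1 (hc1 : composable u1 v1), compat u1 -> compat v1 ->
  factor_box L K a b u1 v1 ->
  (forall i, principal A z i = smul _ (u1 i) (v1 i) (hc1 i)) ->
  Defs.concat A L K z.
Proof.
  intros Hsa Hsb z u1 v1 hc1 Cu1 Cv1 [[x [Lx Ex]] [y [Ky Ey]]] Hz.
  set (n := length (word A z)).
  set (psi := hpair (fmap a) (hpair (fmap b) (trunc_hom A n))).
  assert (Hpsi : is_hom psi).
  { apply hpair_hom; [apply fidx_hom|apply hpair_hom; [apply fidx_hom|apply trunc_hom_hom]]. }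
  destruct (vinj_refinement A (proj1 Afin) _ psi
              (V_prod _ _ (fidx_V A a) (V_prod _ _ (fidx_V A b) (trunc_sgd_V n))) Hpsi)
    as [k [Hk Hkk]].
  assert (Hkb : ker_sub A (fmap k) (hpair (fmap b) (trunc_hom A n))).
  { apply (ker_sub_trans A _ psi); [exact Hkk|apply ker_sub_hpair_r]. }
  destruct (factor_through_vinj A k a Hk) as [tha [Htha [Hva Hea]]].
  { apply (ker_sub_trans A _ psi); [exact Hkk|apply ker_sub_hpair_l]. }
  destruct (factor_through_vinj A k b Hk) as [thb [Hthb [Hvb Heb]]].
  { apply (ker_sub_trans A _ _ _ Hkb), ker_sub_hpair_l. }
  pose proof (fidx_hom A k) as Hfk.
  destruct (proj2 (fidx_onto A k) (u1 k)) as [x1 Ex1].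
  destruct (proj2 (fidx_onto A k) (v1 k)) as [y1 Ey1].
  assert (h1 : ssrc (Aplus A) x1 = stgt (Aplus A) y1).
  { apply Hk. rewrite <- (ssrc_he _ Hfk), <- (stgt_he _ Hfk), Ex1, Ey1. apply hc1. }
  assert (Ez : smul (Aplus A) x1 y1 h1 = z).
  { apply (trunc_hom_separates A n); [unfold n; auto|].
    apply (ker_sub_hpair_r A (fmap b)), Hkb.
    rewrite (he_smul _ Hfk _ _ h1 (he_composable _ Hfk _ _ h1)).
    change (he (fmap k) z) with (principal A z k). rewrite Hz.
    apply smul_congr; auto. }
  exists x1, y1, h1. split; [|split; auto].
  - apply (Hsa x); auto.
    rewrite <- Ex, <- (Cu1 k a tha Htha Hva Hea), <- Ex1. apply Hea.
  - apply (Hsb y); auto.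
    rewrite <- Ey, <- (Cv1 k b thb Hthb Hvb Heb), <- Ey1. apply Heb.
Qed.

Hypothesis Hop : multiplication_open V A.

(* If [LK] were not recognizable, an ultrafilter limit of pairs separating [LK]
   lies in the open image of [factor_box]; a word outside [LK] close to it is
   then in that image too. *)
Lemma concat_recognizable_of_open L K : recognizable V A L -> recognizable V A K ->
  recognizable V A (Defs.concat A L K).
Proof.
  intros HL HK.
  destruct (vinj_saturates A (proj1 Afin) L HL) as [a [_ Hsa]].
  destruct (vinj_saturates A (proj1 Afin) K HK) as [b [_ Hsb]].
  set (LK := Defs.concat A L K).
  apply NNPP; intro NR.
  set (P := fun (T : list (fidx V A)) (p : pathE A * pathE A) => LK (fst p) /\ ~ LK (snd p) /\
              forall i, In i T -> he (fmap i) (fst p) = he (fmap i) (snd p)).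
  destruct (ultra_of_list_family P) as [G [HG GP]].
  { intro T. destruct (not_recognizable_separated A LK NR T) as [z [z' H]]. exists (z, z'). exact H. }
  { intros T1 T2 p [L1 [L2 L3]].
    split; (split; [auto|split; [auto|]]); intros i Hi; apply L3, in_or_app; auto. }
  set (xf := fun p : pathE A * pathE A => fst (concat_split L K (fst p))).
  set (yf := fun p : pathE A * pathE A => snd (concat_split L K (fst p))).
  assert (Gsplit : G (fun p => exists h, L (xf p) /\ K (yf p) /\ fst p = pmul A (xf p) (yf p) h)).
  { apply (ultra_mono _ G HG _ _ (GP [])). intros p [Hp _]. apply concat_splitP, Hp. }
  assert (hcb : composable (ulim_path A _ G HG xf) (ulim_path A _ G HG yf)).
  { apply ulim_path_composable, (ultra_mono _ G HG _ _ Gsplit). intros p [h _]; exact h. }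
  destruct (Hop (factor_box L K a b) (factor_box_open A L K a b)
              (ulim_path A _ G HG fst) (ulim_path_compat A _ G HG fst)) as [S0 HS0].
  { split; [apply ulim_path_compat|].
    exists (ulim_path A _ G HG xf), (ulim_path A _ G HG yf), hcb.
    split; [apply ulim_path_compat|split; [apply ulim_path_compat|split; [split|]]].
    - destruct (ultra_ex _ G HG _ (ultra_and _ G HG _ _ (ulim_pathP A _ G HG xf a) Gsplit))
        as [p [<- [h [Lp _]]]]. eauto.
    - destruct (ultra_ex _ G HG _ (ultra_and _ G HG _ _ (ulim_pathP A _ G HG yf b) Gsplit))
        as [p [<- [h [_ [Kp _]]]]]. eauto.
    - intro i. apply ulim_path_mul.
      apply (ultra_mono _ G HG _ _ (ultra_and _ G HG _ _ (ulim_pathP A _ G HG fst i) Gsplit)).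
      intros p [E [h [_ [_ Ep]]]]. exists h. rewrite <- Ep. exact E. }
  destruct (ultra_ex _ G HG _ (ultra_and _ G HG _ _ (GP S0) (ulim_path_in A _ G HG fst S0)))
    as [[z z'] [[_ [nLKz' Hag]] Hzu]]. simpl in *.
  destruct (HS0 (principal A z') (principal_compat A z')) as [_ [u1 [v1 [hc1 [Cu1 [Cv1 [Hbox Hp1]]]]]]].
  { intros i Hi. unfold principal. rewrite <- (Hag i Hi). apply (Hzu i Hi). }
  apply nLKz'. exact (concat_of_principal_factor L K a b Hsa Hsb z' u1 v1 hc1 Cu1 Cv1 Hbox Hp1).
Qed.

End ConcatFromOpenness.

(* Over a finite-vertex graph, [phi] factors through the finite graph whose
   edges are the triples (range, source, phi-value) of edges of [A]. *)
Section KeyGraph.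
Variable A : graph.
Hypothesis Afv : finite_vertex_graph A.
Variable F : sgd.
Variable phi : hom (Aplus A) F.
Hypothesis HF : V F.
Hypothesis Hp : is_hom phi.

Definition key_type := (gV A * gV A * sE F)%type.
Definition edge_key (a : gE A) : key_type := (gtgt A a, gsrc A a, he phi (single A a)).

Definition key_graph : graph :=
  Graph (gV A) {kk : key_type | exists a, edge_key a = kk}
    (fun kk => snd (fst (proj1_sig kk))) (fun kk => fst (fst (proj1_sig kk))).

Lemma key_graph_finite : finite_graph key_graph.
Proof.
  destruct Afv as [lv Hv]. destruct (V_finite F HF) as [_ [lf Hf]].
  split; [exists lv; auto|].
  apply (sig_list _ (list_prod (list_prod lv lv) lf)). intros x _.
  apply list_prod_full; auto. apply list_prod_full; auto.
Qed.

Definition key_edge (a : gE A) : gE key_graph := exist _ (edge_key a) (ex_intro _ a eq_refl).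

Lemma is_path_key e p : is_path A e p -> is_path key_graph (key_edge e) (map key_edge p).
Proof. revert e; induction p as [|g p IH]; simpl; auto. intros e [H1 H2]. split; auto. Qed.

Lemma plast_key e p : plast key_graph (key_edge e) (map key_edge p) = key_edge (plast A e p).
Proof. revert e; induction p; simpl; auto. Qed.

Definition key_path (x : pathE A) : pathE key_graph :=
  exist _ (key_edge (fst (proj1_sig x)), map key_edge (snd (proj1_sig x)))
    (is_path_key _ _ (proj2_sig x)).

Lemma psrc_key_path x : psrc key_graph (key_path x) = psrc A x.
Proof. unfold psrc, key_path; simpl. rewrite plast_key. reflexivity. Qed.

Lemma ptgt_key_path x : ptgt key_graph (key_path x) = ptgt A x.
Proof. reflexivity. Qed.

Lemma key_path_pmul x y h h' :
  key_path (pmul A x y h) = pmul key_graph (key_path x) (key_path y) h'.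
Proof. apply path_ext. simpl. rewrite map_app. reflexivity. Qed.

Lemma he_single_key e f : key_edge e = key_edge f -> he phi (single A e) = he phi (single A f).
Proof. intro E. apply (f_equal (@proj1_sig _ _)) in E. injection E; auto. Qed.

Lemma he_key_path_aux : forall l e f m (Hx : is_path A e l) (Hy : is_path A f m),
  key_edge e = key_edge f -> map key_edge l = map key_edge m ->
  he phi (exist _ (e, l) Hx) = he phi (exist _ (f, m) Hy).
Proof.
  induction l as [|g l IH]; intros e f m Hx Hy E1 E2.
  - destruct m; [|discriminate]. destruct Hx, Hy. apply he_single_key, E1.
  - destruct m as [|g' m]; [discriminate|].
    assert (E4 : map key_edge l = map key_edge m) by exact (f_equal (@tl _) E2).
    rewrite (path_cons A e g l Hx), (path_cons A f g' m Hy).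
    set (x := exist _ (g, l) (proj2 Hx) : sE (Aplus A)).
    set (y := exist _ (g', m) (proj2 Hy) : sE (Aplus A)).
    etransitivity; [apply (he_smul _ Hp (single A e : sE (Aplus A)) x (proj1 Hx)
                             (he_composable _ Hp (single A e : sE (Aplus A)) x (proj1 Hx)))|].
    etransitivity; [|symmetry; apply (he_smul _ Hp (single A f : sE (Aplus A)) y (proj1 Hy)
                             (he_composable _ Hp (single A f : sE (Aplus A)) y (proj1 Hy)))].
    apply smul_congr; [apply he_single_key, E1|apply IH; auto].
    exact (f_equal (hd (key_edge g)) E2).
Qed.

Lemma he_key_path x y : key_path x = key_path y -> he phi x = he phi y.
Proof.
  intro E. apply (f_equal (@proj1_sig _ _)) in E.
  destruct x as [[e l] Hx], y as [[f m] Hy]. simpl in E.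
  apply he_key_path_aux; [exact (f_equal fst E)|exact (f_equal snd E)].
Qed.

Lemma key_path_onto_aux : forall l kk (H : is_path key_graph kk l),
  exists x, key_path x = exist _ (kk, l) H.
Proof.
  induction l as [|k2 l IH]; intros [kk [a Ea]] H.
  - exists (single A a). apply path_ext. simpl. do 2 f_equal. apply sig_ext. exact Ea.
  - destruct H as [H1 H2]. destruct (IH k2 H2) as [x' Ex'].
    apply (f_equal (@proj1_sig _ _)) in Ex'. simpl in Ex'. injection Ex'; intros E2 E1.
    assert (Hp' : is_path A a (fst (proj1_sig x') :: snd (proj1_sig x'))).
    { split; [|apply (proj2_sig x')].
      simpl in H1. rewrite <- Ea in H1. unfold edge_key in H1. simpl in H1.
      rewrite H1, <- E1. reflexivity. }
    exists (exist (fun ep => is_path A (fst ep) (snd ep)) (a, _) Hp'). apply path_ext. simpl.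
    rewrite E1, E2. do 2 f_equal. apply sig_ext. exact Ea.
Qed.

Lemma key_path_onto y : exists x, key_path x = y.
Proof. destruct y as [[kk l] H]. apply key_path_onto_aux. Qed.

Definition key_lift (y : pathE key_graph) : pathE A :=
  proj1_sig (constructive_indefinite_description _ (key_path_onto y)).

Lemma key_liftK y : key_path (key_lift y) = y.
Proof. unfold key_lift. destruct (constructive_indefinite_description _ _); auto. Qed.

Lemma psrc_key_lift y : psrc A (key_lift y) = psrc key_graph y.
Proof. rewrite <- (key_liftK y) at 2. rewrite psrc_key_path. reflexivity. Qed.

Lemma ptgt_key_lift y : ptgt A (key_lift y) = ptgt key_graph y.
Proof. rewrite <- (key_liftK y) at 2. reflexivity. Qed.

Definition lifted_hom : hom (Aplus key_graph) F :=
  Hom (Aplus key_graph) F (hv phi) (fun y => he phi (key_lift y)).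

Lemma lifted_hom_hom : is_hom lifted_hom.
Proof.
  split; [|split]; simpl.
  - intro y. rewrite (ssrc_he _ Hp). simpl. rewrite psrc_key_lift. reflexivity.
  - intro y. rewrite (stgt_he _ Hp). simpl. rewrite ptgt_key_lift. reflexivity.
  - intros s t h h'.
    assert (hd : psrc A (key_lift s) = ptgt A (key_lift t)).
    { rewrite psrc_key_lift, ptgt_key_lift. exact h. }
    transitivity (he phi (pmul A (key_lift s) (key_lift t) hd)).
    + apply he_key_path. rewrite key_liftK.
      rewrite (key_path_pmul _ _ hd (eq_trans (psrc_key_path _) (eq_trans hd (ptgt_key_path _)))).
      apply pmul_congr; symmetry; apply key_liftK.
    + apply (he_smul _ Hp (key_lift s : sE (Aplus A))).
Qed.

Definition key_path_hom : hom (Aplus A) (Aplus key_graph) :=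
  Hom (Aplus A) (Aplus key_graph) (fun v => v) key_path.

Lemma key_path_hom_hom : is_hom key_path_hom.
Proof.
  split; [|split]; simpl.
  - intro; apply psrc_key_path.
  - intro; reflexivity.
  - intros; apply key_path_pmul.
Qed.

Lemma key_path_split v y1 y2 h : key_path v = pmul key_graph y1 y2 h ->
  exists v1 v2 h', v = pmul A v1 v2 h' /\ key_path v1 = y1 /\ key_path v2 = y2.
Proof.
  intro E. apply (f_equal (@proj1_sig _ _)) in E.
  destruct v as [[e l] Hv], y1 as [[k1 l1] H1], y2 as [[k2 l2] H2]. simpl in E.
  injection E; intros E2 E1.
  destruct (map_eq_app _ _ _ _ E2) as [la [lb' [El [Ea Eb']]]].
  destruct (map_eq_cons _ _ Eb') as [f [lb [Elb [Ef Eb]]]]. subst l lb'.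
  simpl in Hv. destruct (is_path_app_inv A e la f lb Hv) as [Pa [Pm Pb]].
  exists (exist _ (e, la) Pa), (exist _ (f, lb) Pb), Pm. split; [|split].
  - apply path_ext. reflexivity.
  - apply path_ext. simpl. rewrite E1, Ea. reflexivity.
  - apply path_ext. simpl. rewrite Ef, Eb. reflexivity.
Qed.

Hypothesis Hcc : concatenation_closed V.

Lemma concat_recognizable_of_saturates L K : saturates A phi L -> saturates A phi K ->
  recognizable V A (Defs.concat A L K).
Proof.
  intros HL HK.
  assert (HsatL : saturates key_graph lifted_hom (fun y => L (key_lift y))).
  { intros u v e Lu. apply (HL (key_lift u)); auto. }
  assert (HsatK : saturates key_graph lifted_hom (fun y => K (key_lift y))).
  { intros u v e Ku. apply (HK (key_lift u)); auto. }
  destruct (saturates_of_recognizable key_graph _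
              (Hcc key_graph key_graph_finite _ _
                 (recognizable_of_saturates _ F lifted_hom _ HF lifted_hom_hom HsatL)
                 (recognizable_of_saturates _ F lifted_hom _ HF lifted_hom_hom HsatK)))
    as [G [psi [HG [Hpsi Hs]]]].
  apply (recognizable_of_saturates A G (hcomp psi key_path_hom) _ HG
           (hcomp_hom _ _ key_path_hom_hom Hpsi)).
  intros u v e [x [y [h [Lx [Ky Eu]]]]].
  destruct (Hs (key_path u) (key_path v) e) as [y1 [y2 [h2 [L1 [K2 Ev]]]]].
  { exists (key_path x), (key_path y), (eq_trans (psrc_key_path _) (eq_trans h (ptgt_key_path _))).
    split; [|split].
    - apply (HL x); auto. apply he_key_path. symmetry. apply key_liftK.
    - apply (HK y); auto. apply he_key_path. symmetry. apply key_liftK.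
    - rewrite Eu. apply key_path_pmul. }
  destruct (key_path_split v y1 y2 h2 Ev) as [v1 [v2 [h' [Ev' [E1 E2]]]]].
  exists v1, v2, h'. split; [|split; auto].
  - apply (HL (key_lift y1)); auto. apply he_key_path. rewrite key_liftK; auto.
  - apply (HK (key_lift y2)); auto. apply he_key_path. rewrite key_liftK; auto.
Qed.

End KeyGraph.

Lemma recog_concat_closed_of_concat_closed : concatenation_closed V ->
  forall A, finite_vertex_graph A -> recog_concat_closed V A.
Proof.
  intros Hcc A Afv L K HL HK.
  destruct (saturates_common A [L; K]) as [F [phi [HF [Hp Hs]]]].
  { intros M [<-|[<-|[]]]; auto. }
  apply (concat_recognizable_of_saturates A Afv F phi HF Hp Hcc).
  - apply Hs; left; auto.
  - apply Hs; right; left; auto.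
Qed.

Section FiniteLanguages.
Hypothesis Hcc : concatenation_closed V.
Variable A : graph.
Hypothesis Afin : finite_graph A.

Definition length_ge (m : nat) : lang A := fun x => m <= length (word A x).

Lemma recognizable_length_ge m : recognizable V A (length_ge (S m)).
Proof.
  induction m as [|m IH].
  - apply (recognizable_ext A (fun _ => True)); [|apply recognizable_full].
    intro x; split; auto. intros _. apply word_length.
  - apply (recognizable_ext A (Defs.concat A (fun _ => True) (length_ge (S m)))); [|apply Hcc; auto; apply recognizable_full].
    intro x; split.
    + intros [u [v [h [_ [Hv ->]]]]]. unfold length_ge in *. simpl (smul _ _ _ _).
      rewrite word_pmul, length_app. pose proof (word_length A u). lia.
    + intro Hx. destruct x as [[e l] H]. unfold length_ge, word in Hx; simpl in Hx.
      destruct l as [|g l]; [simpl in Hx; lia|].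
      rewrite (path_cons A e g l H).
      exists (single A e), (exist _ (g, l) (proj2 H)), (proj1 H). split; [auto|split; [|reflexivity]].
      unfold length_ge, word; simpl in *. lia.
Qed.

Lemma recognizable_endpoints p q : recognizable V A (fun x => ptgt A x = p /\ psrc A x = q).
Proof.
  apply (recognizable_of_saturates A _ (endpoints A) _ (complete_sgd_V A (proj1 Afin)) (endpoints_hom A)).
  intros u v e [E1 E2]. simpl in e. injection e; intros; split; congruence.
Qed.

Hypothesis edge_det : forall e e' : gE A, gtgt A e = gtgt A e' -> gsrc A e = gsrc A e' -> e = e'.

Lemma recognizable_single e : recognizable V A (fun x => x = single A e).
Proof.
  apply (recognizable_ext A (fun x => (~ length_ge 2 x) /\ (ptgt A x = gtgt A e /\ psrc A x = gsrc A e))).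
  2: { apply (recognizable_inter A); [apply recognizable_compl; apply recognizable_length_ge|apply recognizable_endpoints]. }
  intro x; split.
  - intros [N [E1 E2]]. destruct x as [[e' l] H]. unfold length_ge, word in N; simpl in N.
    destruct l; [|simpl in N; lia].
    unfold ptgt, psrc in *; simpl in *. assert (e' = e) by (apply edge_det; auto). subst.
    apply path_ext; reflexivity.
  - intros ->. unfold length_ge, word; simpl. split; [lia|auto].
Qed.

Lemma recognizable_singleton : forall l e (H : is_path A e l),
  recognizable V A (fun x => x = exist (fun ep => is_path A (fst ep) (snd ep)) (e, l) H).
Proof.
  induction l as [|g l IH]; intros e H.
  - apply (recognizable_ext A (fun x => x = single A e)); [|apply recognizable_single].
    intro x; split; intros ->; apply path_ext; reflexivity.
  - apply (recognizable_ext A (Defs.concat A (fun x => x = single A e)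
             (fun x => x = exist (fun ep => is_path A (fst ep) (snd ep)) (g, l) (proj2 H)))).
    2: { apply Hcc; [exact Afin|apply recognizable_single|apply IH]. }
    intro x; split.
    + intros [u [v [h [-> [-> ->]]]]]. apply path_ext; reflexivity.
    + intros ->. rewrite (path_cons A e g l H).
      exists (single A e), (exist _ (g, l) (proj2 H)), (proj1 H). auto.
Qed.

Lemma short_paths_list M : exists lp : list (pathE A), forall x, length (word A x) <= M -> In x lp.
Proof.
  destruct Afin as [_ [lE HE]].
  destruct (sig_list_on (fun ep : gE A * list (gE A) => is_path A (fst ep) (snd ep))
             (fun ep => length (snd ep) <= M) (list_prod lE (words_upto (gE A) lE M))) as [ls Hls].
  { intros [e l] _ Hl. apply in_prod; auto. apply words_upto_full; auto. }
  exists ls. intros x Hx. apply Hls. unfold word in Hx. simpl in Hx. lia.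
Qed.

Lemma short_paths_separated M : exists F (phi : hom (Aplus A) F), V F /\ is_hom phi /\
  forall x y, he phi x = he phi y -> x = y \/ (length_ge (S M) x /\ length_ge (S M) y).
Proof.
  destruct (short_paths_list M) as [lp Hlp].
  destruct (saturates_common A (length_ge (S M) :: map (fun w => fun x => x = w) lp)) as [F [phi [HF [Hp Hs]]]].
  { intros L [<-|HL]; [apply recognizable_length_ge|].
    apply in_map_iff in HL. destruct HL as [[[e l] H] [<- _]]. apply recognizable_singleton. }
  exists F, phi. split; [auto|split; [auto|]].
  intros x y E.
  destruct (classic (length_ge (S M) x)) as [Lx|Sx].
  - right. split; auto. apply (Hs _ (or_introl eq_refl) x y E Lx).
  - left. assert (Inx : In x lp) by (apply Hlp; unfold length_ge in Sx; lia).
    symmetry. apply (Hs (fun z => z = x) (or_intror (proj2 (in_map_iff _ _ _) (ex_intro _ x (conj eq_refl Inx)))) x y E).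
    reflexivity.
Qed.
End FiniteLanguages.

Section NilpotentInV.
Hypothesis Hcc : concatenation_closed V.
Variable Sg : sgd.
Hypothesis HS : is_sgd Sg.
Hypothesis HSf : finite_sgd Sg.
Variable x0 : sV Sg.
Hypothesis Hone : forall y, y = x0.
Variable z : sE Sg.
Variable n : nat.
Hypothesis Hnil : forall f w, is_prod Sg f n w -> w = z.

Let value := loop_value Sg x0 Hone.

(* [Sg] divides the local semigroup at the base vertex of any vertex-injective
   index that separates all paths of length at most [2n + 1]: there, a loop's
   image determines its value in [Sg]. *)
Section LocalDivisor.
Variable k : fidx V (letter_graph Sg).
Hypothesis Hk : vinj (letter_graph Sg) k.
Hypothesis Hker : forall x y, he (fmap k) x = he (fmap k) y ->
  x = y \/ (length_ge (letter_graph Sg) (S (2 * n + 1)) x /\ length_ge (letter_graph Sg) (S (2 * n + 1)) y).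

Let I := projT1 k.
Let HI : is_sgd I := fidx_is_sgd (letter_graph Sg) k.
Let Hfk : is_hom (fmap k) := fidx_hom (letter_graph Sg) k.
Let base := hv (fmap k) None.

Lemma loop_value_ker d1 d2 : base_loop Sg d1 -> base_loop Sg d2 ->
  he (fmap k) d1 = he (fmap k) d2 -> value d1 = value d2.
Proof.
  intros H1 H2 E. destruct (Hker d1 d2 E) as [->|[L1 L2]]; auto.
  unfold length_ge, value in *.
  rewrite !(loop_value_long Sg x0 Hone z n Hnil); auto; lia.
Qed.

Lemma base_loop_of d : ssrc I (he (fmap k) d) = base -> stgt I (he (fmap k) d) = base ->
  base_loop Sg d.
Proof.
  intros H1 H2. rewrite (ssrc_he _ Hfk) in H1. rewrite (stgt_he _ Hfk) in H2.
  split; apply Hk; auto.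
Qed.

Definition loop_lift (e : loop_at I base) : pathE (letter_graph Sg) :=
  proj1_sig (constructive_indefinite_description _ (proj2 (fidx_onto (letter_graph Sg) k) (proj1_sig e))).

Lemma loop_liftK e : he (fmap k) (loop_lift e) = proj1_sig e.
Proof. unfold loop_lift. destruct (constructive_indefinite_description _ _); auto. Qed.

Lemma loop_lift_base e : base_loop Sg (loop_lift e).
Proof. apply base_loop_of; rewrite loop_liftK; apply (proj2_sig e). Qed.

Definition local_value : hom (local_sgd I HI base) Sg :=
  Hom (local_sgd I HI base) Sg (fun _ => x0) (fun e => value (loop_lift e)).

Lemma local_value_hom : is_hom local_value.
Proof.
  split; [|split]; simpl; try (intro; apply Hone).
  intros e1 e2 h h'.
  destruct (loop_lift_base e1) as [T1 S1], (loop_lift_base e2) as [T2 S2].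
  assert (hd : psrc (letter_graph Sg) (loop_lift e1) = ptgt (letter_graph Sg) (loop_lift e2)) by congruence.
  assert (Hl : base_loop Sg (pmul (letter_graph Sg) (loop_lift e1) (loop_lift e2) hd)).
  { split; [exact T1|].
    exact (eq_trans (ssrc_smul _ (Aplus_sgd _) (loop_lift e1 : sE (Aplus _)) _ hd) S2). }
  rewrite (loop_value_ker _ _ (loop_lift_base _) Hl).
  - unfold value. rewrite (loop_value_pmul Sg HS x0 Hone) by apply loop_lift_base.
    apply smul_congr; auto.
  - rewrite loop_liftK. simpl. symmetry.
    etransitivity; [apply (he_smul _ Hfk (loop_lift e1 : sE (Aplus (letter_graph Sg))) (loop_lift e2) hd
                             (he_composable _ Hfk _ _ hd))|].
    apply smul_congr; apply loop_liftK.
Qed.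

Lemma letter_loop_at s :
  ssrc I (he (fmap k) (letter_loop Sg s)) = base /\ stgt I (he (fmap k) (letter_loop Sg s)) = base.
Proof. rewrite (ssrc_he _ Hfk), (stgt_he _ Hfk). split; reflexivity. Qed.

Lemma divides_local : divides Sg I.
Proof.
  exists (local_sgd I HI base), (local_incl I HI base), local_value.
  split; [apply local_is_sgd|split; [apply local_incl_hom|split; [apply local_value_hom|]]].
  split; [apply local_incl_faithful|split; [|split]].
  - intros [] [] _; reflexivity.
  - intro y. exists tt. symmetry; apply Hone.
  - intro s. exists (exist (fun e => ssrc I e = base /\ stgt I e = base) _ (letter_loop_at s)).
    simpl.
    transitivity (value (letter_loop Sg s)); [|reflexivity].
    apply loop_value_ker; [apply loop_lift_base|split; reflexivity|].
    rewrite loop_liftK. reflexivity.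
Qed.

End LocalDivisor.

Lemma nilpotent_in_V : V Sg.
Proof.
  pose proof (letter_graph_finite Sg HSf) as Bfin.
  destruct (short_paths_separated Hcc (letter_graph Sg) Bfin (letter_graph_simple Sg) (2 * n + 1))
    as [F [phi [HF [Hp Hker]]]].
  destruct (vinj_refinement (letter_graph Sg) (proj1 Bfin) F phi HF Hp) as [k [Hk Hkk]].
  apply (V_divisor Sg (projT1 k) (fidx_V (letter_graph Sg) k) HS HSf).
  apply (divides_local k Hk). intros x y E. apply Hker, Hkk, E.
Qed.

End NilpotentInV.

Lemma containsN_of_concat_closed : concatenation_closed V -> containsN V.
Proof.
  intros Hcc Sg HS HSf [x0 Hone] [z [n Hnil]].
  apply (nilpotent_in_V Hcc Sg HS HSf x0 Hone z n Hnil).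
Qed.

Lemma concat_closed_of_open : containsN V ->
  (forall A, finite_graph A -> multiplication_open V A) -> concatenation_closed V.
Proof.
  intros HN Hop A Afin L K.
  apply (concat_recognizable_of_open A Afin HN (Hop A Afin)).
Qed.

End Pseudovariety.

Theorem mainTheorem2 (V : sgd -> Prop) :
  pseudovariety V ->
  (concatenation_closed V <->
     (forall A : graph, finite_vertex_graph A -> recog_concat_closed V A)) /\
  (concatenation_closed V <->
     (containsN V /\
      forall A : graph, finite_vertex_graph A -> multiplication_open V A)) /\
  (concatenation_closed V <->
     (containsN V /\
      forall A : graph, finite_graph A -> multiplication_open V A)).
Proof.
  intro HV.
  pose proof (recog_concat_closed_of_concat_closed V HV) as H12.
  pose proof (containsN_of_concat_closed V HV) as H1N.
  pose proof (concat_closed_of_open V HV) as H41.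
  pose proof (fun H A Afv => multiplication_open_of_recog_concat_closed V HV A Afv (H A Afv))
    as H23.
  split; [|split]; split.
  - apply H12.
  - intros H A Afin. apply H, Afin.
  - intro H. split; auto.
  - intros [HN Hop]. apply H41; auto. intros A Afin. apply Hop, Afin.
  - intro H. split; auto. intros A Afin. apply (H23 (H12 H)), Afin.
  - intros [HN Hop]. apply H41; auto.
Qed.
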